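(* Let $\mathcal{G}$ be the full subcategory of $\mathcal{L}$ whose objects are geometric lattices. Then $\mathcal{G}$, equipped with the normal monomorphisms and normal epimorphisms of $\mathcal{L}$ whose source and target lie in $\mathcal{G}$, is a proto-exact category (a proto-exact subcategory of $\mathcal{L}$).
   Context: $\mathcal{L}$ is the category of algebraic lattices (complete lattices in which every element is a join of compact elements), with morphisms the maps preserving arbitrary joins and sending compact elements to compact elements. A morphism $f:L_1\to L_2$ in $\mathcal{L}$ is a normal monomorphism if it is injective with downward closed image, and a normal epimorphism if there is $x_0\in L_1$ and an isomorphism $\varphi:\{y\in L_1:y\ge x_0\}\to L_2$ with $f(y)=\varphi(y\vee x_0)$. A finite lattice $L$ is semimodular if all maximal chains between any two comparable elements have the same length and the resulting height function $h$ (length of a maximal chain from $0$) satisfies $h(x)+h(y)\ge h(x\vee y)+h(x\wedge y)$; it is geometric if it is semimodular and every element is a join of atoms (elements of height $1$). Proto-exact category: a pointed category with classes $\mathfrak{M},\mathfrak{E}$ satisfying: $0\to A\in\mathfrak{M}$, $A\to0\in\mathfrak{E}$; both classes contain isomorphisms and are closed under composition; a square with horizontal maps in $\mathfrak{M}$ and vertical maps in $\mathfrak{E}$ is a pullback iff a pushout; any cospan $A'\hookrightarrow B'\twoheadleftarrow B$ and any span $A'\twoheadleftarrow A\hookrightarrow B$ can be completed to such a bi-Cartesian square. *)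

From HB Require Import structures.
From mathcomp Require Import all_boot all_order.
Set Implicit Arguments. Unset Strict Implicit. Unset Printing Implicit Defensive.
Import Order.TTheory.
Local Open Scope order_scope.

Section LatticeDefs.
Context {d : Order.disp_t} (T : finTBLatticeType d).

Definition covers (x y : T) : bool :=
  (x < y) && [forall z : T, ~~ ((x < z) && (z < y))].

(* s is a maximal chain x = c0 < c1 < ... < cn = y (each step a cover),
   written as the list [c1; ...; cn]; its length is size s. *)
Definition maxchain (x y : T) (s : seq T) : bool :=
  path covers x s && (last x s == y).

Definition semimodular : Prop :=
  (forall (x y : T) (s1 s2 : seq T),
      maxchain x y s1 -> maxchain x y s2 -> size s1 = size s2) /\
  exists h : T -> nat,
    (forall (x : T) (s : seq T), maxchain \bot x s -> size s = h x) /\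
    (forall x y : T, h (x `|` y) + h (x `&` y) <= h x + h y)%N.

Definition atom (a : T) : bool := covers \bot a.

Definition geometric : Prop :=
  semimodular /\
  forall x : T, exists S : {set T},
    (forall a, a \in S -> atom a) /\ x = \join_(a in S) a.

(* compact elements (every subset of a finite lattice is finite) *)
Definition compact (x : T) : Prop :=
  forall S : {set T}, x <= \join_(s in S) s ->
    exists F : {set T}, F \subset S /\ x <= \join_(s in F) s.

End LatticeDefs.

Record GObj := MkGObj {
  gdisp : Order.disp_t;
  glat : finTBLatticeType gdisp;
  ggeom : geometric glat }.
Coercion glat : GObj >-> finTBLatticeType.

Definition Lmor (A B : GObj) (f : A -> B) : Prop :=
  (forall S : {set A}, f (\join_(x in S) x) = \join_(x in S) f x) /\
  (forall x : A, compact x -> compact (f x)).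

Definition NMono (A B : GObj) (f : A -> B) : Prop :=
  Lmor f /\ injective f /\
  (forall (x : A) (y : B), y <= f x -> exists z : A, f z = y).

Definition NEpi (A B : GObj) (f : A -> B) : Prop :=
  Lmor f /\
  exists (x0 : A) (phi : A -> B),
    (forall y z : A, x0 <= y -> x0 <= z -> (phi y <= phi z) = (y <= z)) /\
    (forall w : B, exists y : A, x0 <= y /\ phi y = w) /\
    (forall y : A, f y = phi (y `|` x0)).

Definition GIso (A B : GObj) (f : A -> B) : Prop :=
  Lmor f /\ exists g : B -> A, Lmor g /\
    (forall x, g (f x) = x) /\ (forall y, f (g y) = y).

Definition GInitial (Z : GObj) : Prop :=
  forall A : GObj, exists f : Z -> A, Lmor f /\
    forall g : Z -> A, Lmor g -> forall z, g z = f z.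
Definition GTerminal (Z : GObj) : Prop :=
  forall A : GObj, exists f : A -> Z, Lmor f /\
    forall g : A -> Z, Lmor g -> forall a, g a = f a.
Definition GZero (Z : GObj) : Prop := GInitial Z /\ GTerminal Z.

(* Square
     A  --i-->  B
     |p         |q
     A' --j-->  B'     *)
Definition commutes (A B A' B' : GObj) (i : A -> B) (p : A -> A')
  (j : A' -> B') (q : B -> B') : Prop := forall x, q (i x) = j (p x).

Definition GPullback (A B A' B' : GObj) (i : A -> B) (p : A -> A')
  (j : A' -> B') (q : B -> B') : Prop :=
  commutes i p j q /\
  forall (X : GObj) (u : X -> B) (v : X -> A'), Lmor u -> Lmor v ->
    (forall x, q (u x) = j (v x)) ->
    exists w : X -> A, Lmor w /\ (forall x, i (w x) = u x) /\
      (forall x, p (w x) = v x) /\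
      forall w' : X -> A, Lmor w' -> (forall x, i (w' x) = u x) ->
        (forall x, p (w' x) = v x) -> forall x, w' x = w x.

Definition GPushout (A B A' B' : GObj) (i : A -> B) (p : A -> A')
  (j : A' -> B') (q : B -> B') : Prop :=
  commutes i p j q /\
  forall (X : GObj) (u : B -> X) (v : A' -> X), Lmor u -> Lmor v ->
    (forall x, u (i x) = v (p x)) ->
    exists w : B' -> X, Lmor w /\ (forall x, w (q x) = u x) /\
      (forall x, w (j x) = v x) /\
      forall w' : B' -> X, Lmor w' -> (forall x, w' (q x) = u x) ->
        (forall x, w' (j x) = v x) -> forall x, w' x = w x.

Definition ProtoExactG : Prop :=
  (exists Z : GObj, GZero Z /\
     forall A : GObj,
       (exists f : Z -> A, NMono f) /\ (exists g : A -> Z, NEpi g)) /\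
  (forall (A B : GObj) (f : A -> B), GIso f -> NMono f /\ NEpi f) /\
  (forall (A B C : GObj) (f : A -> B) (g : B -> C),
      NMono f -> NMono g -> NMono (g \o f)) /\
  (forall (A B C : GObj) (f : A -> B) (g : B -> C),
      NEpi f -> NEpi g -> NEpi (g \o f)) /\
  (forall (A B A' B' : GObj) (i : A -> B) (p : A -> A')
          (j : A' -> B') (q : B -> B'),
      NMono i -> NMono j -> NEpi p -> NEpi q -> commutes i p j q ->
      (GPullback i p j q <-> GPushout i p j q)) /\
  (forall (A' B B' : GObj) (j : A' -> B') (q : B -> B'),
      NMono j -> NEpi q ->
      exists (A : GObj) (i : A -> B) (p : A -> A'),
        NMono i /\ NEpi p /\ GPullback i p j q /\ GPushout i p j q) /\
  (forall (A A' B : GObj) (p : A -> A') (i : A -> B),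
      NEpi p -> NMono i ->
      exists (B' : GObj) (j : A' -> B') (q : B -> B'),
        NMono j /\ NEpi q /\ GPullback i p j q /\ GPushout i p j q).

(* Every element of a finite lattice is compact, so a morphism of L between
   finite lattices is just a map preserving the bottom and binary joins. A
   normal monomorphism is such a map embedding its source onto a down-set, and
   a normal epimorphism q with kernel element b0 identifies y and z exactly
   when y `|` b0 = z `|` b0. Testing the universal properties of a square
   i, p, j, q of such maps against the two-element lattice shows that it is a
   pullback iff b0 <= i \top iff it is a pushout. Cospans and spans are
   completed by intervals: the elements below some c >= b0 with q c = j \top,
   resp. above i a0 for the kernel element a0 of p. Intervals of geometric
   lattices are geometric: heights shift by a constant, and semimodularity
   makes t `|` lo cover lo for every atom t not below lo. The zero object is
   the one-point lattice. *)

From HB Require Import structures.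
From mathcomp Require Import all_boot all_order zify.
Set Implicit Arguments. Unset Strict Implicit. Unset Printing Implicit Defensive.
Import Order.TTheory.
Local Open Scope order_scope.

Section Chains.
Context {d : Order.disp_t} (T : finTBLatticeType d).
Implicit Types (t x y z : T) (s : seq T).

Lemma covers_lt x y : covers x y -> x < y.
Proof. by case/andP. Qed.

Lemma maxchain_cat x y z s1 s2 :
  maxchain x y s1 -> maxchain y z s2 -> maxchain x z (s1 ++ s2).
Proof.
case/andP => p1 /eqP l1 /andP[p2 /eqP l2].
by rewrite /maxchain cat_path last_cat l1 p1 p2 l2 eqxx.
Qed.

Lemma card_below_lt x y :
  x < y -> (#|[set w : T | (w < x)%O]| < #|[set w : T | (w < y)%O]|)%N.
Proof.
move=> xy; apply: proper_card; apply/properP; split.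
  by apply/subsetP => w; rewrite !inE => /lt_trans; apply.
by exists x; rewrite !inE ?ltxx.
Qed.

Lemma card_above_lt x y :
  x < y -> (#|[set w : T | (y < w)%O]| < #|[set w : T | (x < w)%O]|)%N.
Proof.
move=> xy; apply: proper_card; apply/properP; split.
  by apply/subsetP => w; rewrite !inE; apply: lt_trans.
by exists y; rewrite !inE ?ltxx.
Qed.

Lemma lt_exists_covers x y : x < y -> exists2 z, covers x z & z <= y.
Proof.
move=> xy; pose P z := (x < z) && (z <= y).
have Py : P y by rewrite /P xy lexx.
have [z /andP[xz zy] z_min] := arg_minnP (fun z => #|[set w : T | w < z]|) Py.
exists z => //; rewrite /covers xz; apply/forallP => w; apply/negP => /andP[xw wz].
have := z_min w; rewrite /P xw (le_trans (ltW wz) zy) leqNgt card_below_lt //.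
by move/(_ isT).
Qed.

Lemma le_exists_maxchain x y : x <= y -> exists s, maxchain x y s.
Proof.
have [n] := ubnP #|[set w : T | (x < w)%O]|; elim: n x => // n IH x size_x xy.
have [<-|nxy] := eqVneq x y; first by exists [::]; rewrite /maxchain /= eqxx.
have [z cxz zy] : exists2 z, covers x z & z <= y.
  by apply: lt_exists_covers; rewrite lt_neqAle nxy.
have [s /andP[ps /eqP ls]] : exists s, maxchain z y s.
  apply: IH zy; exact: leq_trans (card_above_lt (covers_lt cxz)) size_x.
by exists (z :: s); rewrite /maxchain /= cxz ps ls eqxx.
Qed.

Lemma atom_meet_bot t x : atom t -> ~~ (t <= x) -> t `&` x = \bot.
Proof.
move=> /andP[_ /forallP /(_ (t `&` x))] no_between tx; apply/eqP.
apply: contraNT no_between => nz.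
rewrite lt_neqAle eq_sym nz le0x /= lt_neqAle leIl andbT.
by apply: contraNneq tx => <-; exact: leIr.
Qed.

Section Height.
Variable h : T -> nat.
Hypothesis maxchain_size : forall x s, maxchain \bot x s -> size s = h x.

Lemma height0 : h \bot = 0%N.
Proof. by rewrite -(maxchain_size (s := [::])) // /maxchain /= eqxx. Qed.

Lemma height_maxchain x y s : maxchain x y s -> h y = (h x + size s)%N.
Proof.
move=> xy; have [s0 x0] := le_exists_maxchain (le0x x).
by rewrite -(maxchain_size (maxchain_cat x0 xy)) size_cat (maxchain_size x0).
Qed.

Lemma height_le x y : x <= y -> (h x <= h y)%N.
Proof. by case/le_exists_maxchain => s /height_maxchain ->; rewrite leq_addr. Qed.

Lemma height_lt x y : x < y -> (h x < h y)%N.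
Proof.
move=> xy; have [s xys] := le_exists_maxchain (ltW xy).
rewrite (height_maxchain xys) -[X in (X < _)%N]addn0 ltn_add2l lt0n size_eq0.
by apply: contraTneq xy => s0; move: xys; rewrite s0 /maxchain /= => /eqP ->; rewrite ltxx.
Qed.

Lemma covers_of_height x y : x < y -> (h y <= (h x).+1)%N -> covers x y.
Proof.
move=> xy hy; rewrite /covers xy; apply/forallP => z.
by apply/negP => /andP[/height_lt ? /height_lt ?]; lia.
Qed.

Lemma height_atom t : atom t -> h t = 1%N.
Proof.
by move=> At; rewrite -(maxchain_size (s := [:: t])) // /maxchain /= eqxx !andbT.
Qed.

Hypothesis height_submod : forall x y, (h (x `|` y) + h (x `&` y) <= h x + h y)%N.

Lemma covers_join_atom x t : atom t -> ~~ (t <= x) -> covers x (t `|` x).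
Proof.
move=> At tx; apply: covers_of_height.
  by rewrite lt_neqAle leUr andbT; apply: contra tx => /eqP ->; exact: leUl.
have := height_submod t x; rewrite (height_atom At) (atom_meet_bot At tx) height0.
lia.
Qed.

End Height.
End Chains.

Definition atomistic {d : Order.disp_t} (T : finTBLatticeType d) : Prop :=
  forall x : T, exists S : {set T},
    (forall a, a \in S -> atom a) /\ x = \join_(a in S) a.

(* The upper end [lo `|` hi] keeps the interval nonempty without assuming
   [lo <= hi]. *)
Section Interval.
Context {d : Order.disp_t} (T : finTBLatticeType d) (lo hi : T).

Definition inItv (x : T) := (lo <= x) && (x <= lo `|` hi).
Record Itv := MkItv { ival : T; ivalP : inItv ival }.
HB.instance Definition _ := [isSub for ival].
HB.instance Definition _ := [Finite of Itv by <:].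

Lemma Itv_le_refl : reflexive (fun x y : Itv => ival x <= ival y).
Proof. by move=> x; rewrite lexx. Qed.
Lemma Itv_le_anti : antisymmetric (fun x y : Itv => ival x <= ival y).
Proof. by move=> x y /le_anti; apply: val_inj. Qed.
Lemma Itv_le_trans : transitive (fun x y : Itv => ival x <= ival y).
Proof. by move=> x y z; apply: le_trans. Qed.
HB.instance Definition _ :=
  Order.Le_isPOrder.Build d Itv Itv_le_refl Itv_le_anti Itv_le_trans.

Lemma inItv_meet x y : inItv x -> inItv y -> inItv (x `&` y).
Proof.
by case/andP => lx xh /andP[ly _]; rewrite /inItv lexI lx ly (le_trans (leIl x y)).
Qed.
Lemma inItv_join x y : inItv x -> inItv y -> inItv (x `|` y).
Proof.
by case/andP => lx xh /andP[_ yh]; rewrite /inItv leUx xh yh (le_trans lx (leUl x y)).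
Qed.
Lemma inItv_lo : inItv lo. Proof. by rewrite /inItv lexx leUl. Qed.
Lemma inItv_top : inItv (lo `|` hi). Proof. by rewrite /inItv lexx leUl. Qed.

Definition Itv_meet (x y : Itv) := MkItv (inItv_meet (ivalP x) (ivalP y)).
Definition Itv_join (x y : Itv) := MkItv (inItv_join (ivalP x) (ivalP y)).
Lemma Itv_meetP (x y z : Itv) : (x <= Itv_meet y z) = (x <= y) && (x <= z).
Proof. exact: lexI. Qed.
Lemma Itv_joinP (x y z : Itv) : (Itv_join x y <= z) = (x <= z) && (y <= z).
Proof. exact: leUx. Qed.
HB.instance Definition _ :=
  Order.POrder_MeetJoin_isLattice.Build d Itv Itv_meetP Itv_joinP.

Lemma Itv_ge_lo (x : Itv) : lo <= ival x. Proof. by case/andP: (ivalP x). Qed.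
Lemma Itv_le_hi (x : Itv) : ival x <= lo `|` hi. Proof. by case/andP: (ivalP x). Qed.
HB.instance Definition _ :=
  Order.hasBottom.Build d Itv (bottom := MkItv inItv_lo) Itv_ge_lo.
HB.instance Definition _ := Order.hasTop.Build d Itv (top := MkItv inItv_top) Itv_le_hi.

Lemma ival_le (x y : Itv) : (x <= y) = (ival x <= ival y). Proof. by []. Qed.
Lemma ival_lt (x y : Itv) : (x < y) = (ival x < ival y).
Proof. by rewrite !lt_def ival_le (inj_eq val_inj). Qed.
Lemma ival_join (x y : Itv) : ival (x `|` y) = ival x `|` ival y. Proof. by []. Qed.
Lemma ival_meet (x y : Itv) : ival (x `&` y) = ival x `&` ival y. Proof. by []. Qed.
Lemma ival_bot : ival (\bot : Itv) = lo. Proof. by []. Qed.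
Lemma ival_top : ival (\top : Itv) = lo `|` hi. Proof. by []. Qed.

Lemma covers_Itv (x y : Itv) : covers x y = covers (ival x) (ival y).
Proof.
rewrite /covers ival_lt; case: (ival x < ival y) => //=.
apply/forallP/forallP => between z; last by rewrite !ival_lt.
apply/negP => /andP[xz zy].
have z_in : inItv z.
  by rewrite /inItv (le_trans (Itv_ge_lo x) (ltW xz)) (le_trans (ltW zy) (Itv_le_hi y)).
by have := between (MkItv z_in); rewrite !ival_lt /= xz zy.
Qed.

Lemma maxchain_Itv (x y : Itv) s :
  maxchain x y s = maxchain (ival x) (ival y) (map ival s).
Proof.
rewrite /maxchain path_map last_map (inj_eq val_inj); congr (_ && _).
by apply: eq_path => a b; rewrite /= covers_Itv.
Qed.

End Interval.

Section IntervalGeometric.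
Context {d : Order.disp_t} (T : finTBLatticeType d) (lo hi : T).
Local Notation I := (Itv lo hi).

Lemma semimodular_Itv : semimodular T -> semimodular I.
Proof.
case=> chain_eq [h [h_size h_submod]]; split.
  by move=> x y s1 s2; rewrite !maxchain_Itv => /chain_eq eq_s /eq_s; rewrite !size_map.
exists (fun x : I => h (ival x) - h lo)%N; split.
  move=> x s; rewrite maxchain_Itv ival_bot => /(height_maxchain h_size) ->.
  by rewrite size_map addKn.
move=> x y; have := h_submod (ival x) (ival y); rewrite ival_join ival_meet.
have := height_le h_size (Itv_ge_lo x); have := height_le h_size (Itv_ge_lo y).
have := height_le h_size (Itv_ge_lo (x `&` y)); rewrite ival_meet.
have := height_le h_size (le_trans (Itv_ge_lo x) (leUl (ival x) (ival y))).
lia.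
Qed.

Lemma atomistic_Itv : semimodular T -> atomistic T -> atomistic I.
Proof.
case=> _ [h [h_size h_submod]] atomsT x.
have [S0 [S0_atoms xE]] := atomsT (ival x).
exists [set z : I | atom z && (z <= x)]; split=> [a|]; first by rewrite inE => /andP[].
apply/le_anti/andP; split; last by apply/joinsP => z; rewrite inE => /andP[].
set J := \join_(_ in _) _; rewrite ival_le xE; apply/joinsP => t tS0.
have [t_lo|t_nlo] := boolP (t <= lo); first exact: le_trans t_lo (Itv_ge_lo J).
have t_x : t <= ival x by rewrite xE; exact: joins_sup tS0.
have tlo_in : inItv lo hi (t `|` lo).
  by rewrite /inItv leUr leUx (le_trans t_x (Itv_le_hi x)) leUl.
have tlo_J : MkItv tlo_in \in [set z : I | atom z && (z <= x)].
  rewrite inE /atom covers_Itv ival_bot (covers_join_atom h_size h_submod) ?S0_atoms //.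
  by rewrite ival_le /= leUx t_x Itv_ge_lo.
exact: le_trans (leUl t lo) (joins_sup (fun z : I => z) tlo_J).
Qed.

Lemma geometric_Itv : geometric T -> geometric I.
Proof. by case=> semiT atomsT; split; [exact: semimodular_Itv | exact: atomistic_Itv]. Qed.

End IntervalGeometric.

Arguments ival {d T lo hi}.
Arguments MkItv {d T lo hi ival}.

Definition GItv (A : GObj) (lo hi : A) : GObj :=
  MkGObj (geometric_Itv lo hi (ggeom A)).

Lemma covers_bool (x y : bool) : covers x y = ~~ x && y.
Proof.
rewrite /covers; case: x; case: y; rewrite ?ltxx //=.
by apply/forallP; case; apply/negP; case/andP.
Qed.

Lemma maxchain_size_bool (x y : bool) s : maxchain x y s -> size s = (~~ x && y : nat).
Proof.
rewrite /maxchain; case: s => [|a [|b s]] /=.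
- by move/eqP => ->; case: y.
- by rewrite covers_bool; case: x; case: a; case: y.
- by rewrite !covers_bool; case: x; case: a; case: b.
Qed.

Lemma geometric_bool : geometric bool.
Proof.
split; first split.
- by move=> x y s1 s2 /maxchain_size_bool -> /maxchain_size_bool ->.
- by exists nat_of_bool; split=> [x s /maxchain_size_bool ->|[] []].
- move=> x; exists (if x then [set true] else set0); split.
    by case: x => a; rewrite ?inE // => /eqP ->; rewrite /atom covers_bool.
  by case: x; rewrite ?big_set1 ?big_set0.
Qed.

Definition boolG : GObj := MkGObj geometric_bool.

(* The one-point lattice [false, false] of [bool]. *)
Definition ZeroG : GObj := GItv (false : boolG) false.

Lemma ZeroG_eq (z w : ZeroG) : z = w.
Proof. by apply: val_inj; case: z w => [[] ?] [[] ?]. Qed.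

Lemma compact_fin {d : Order.disp_t} (T : finTBLatticeType d) (x : T) : compact x.
Proof. by move=> S xS; exists S. Qed.

Section LatticeMorphisms.
Variables A B : GObj.
Implicit Types f : A -> B.

Lemma Lmor_bot f : Lmor f -> f \bot = \bot.
Proof. by case=> f_join _; have := f_join set0; rewrite !big_set0. Qed.

Lemma Lmor_join f : Lmor f -> forall x y, f (x `|` y) = f x `|` f y.
Proof.
by case=> f_join _ x y; have := f_join [set x; y]; rewrite !joins_setU !big_set1.
Qed.

Lemma join_morph_Lmor f :
  f \bot = \bot -> (forall x y, f (x `|` y) = f x `|` f y) -> Lmor f.
Proof. by move=> f0 fU; split=> [S|x _]; [exact: big_morph | exact: compact_fin]. Qed.

Lemma Lmor_le f : Lmor f -> forall x y, x <= y -> f x <= f y.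
Proof. by move=> Lf x y /join_idPr <-; rewrite (Lmor_join Lf) leUl. Qed.

Lemma NMono_Lmor f : NMono f -> Lmor f. Proof. by case. Qed.
Lemma NMono_inj f : NMono f -> injective f. Proof. by case=> _ []. Qed.
Lemma NMono_down f x y : NMono f -> y <= f x -> exists z, f z = y.
Proof. by case=> _ [_ f_down] /f_down. Qed.

Lemma NMono_le f : NMono f -> forall x y, (f x <= f y) = (x <= y).
Proof.
move=> Hf x y; apply/idP/idP; last exact/Lmor_le/NMono_Lmor.
by move/join_idPr; rewrite -(Lmor_join (NMono_Lmor Hf)) => /(NMono_inj Hf) <-; exact: leUl.
Qed.

Lemma NMono_of_down f :
  Lmor f -> injective f -> (forall y, y <= f \top -> exists x, f x = y) -> NMono f.
Proof.
move=> Lf f_inj f_down; split=> //; split=> // x y yfx.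
by apply: f_down; rewrite (le_trans yfx) // (Lmor_le Lf (lex1 x)).
Qed.

Lemma Lmor_const_bot : Lmor (fun _ : A => \bot : B).
Proof. by apply: join_morph_Lmor => // x y; rewrite joinxx. Qed.

End LatticeMorphisms.

Lemma Lmor_comp (A B C : GObj) (f : A -> B) (g : B -> C) :
  Lmor f -> Lmor g -> Lmor (g \o f).
Proof.
move=> Lf Lg; apply: join_morph_Lmor => [|x y] /=; first by rewrite !Lmor_bot.
by rewrite (Lmor_join Lf) (Lmor_join Lg).
Qed.

Lemma Lmor_cancel_mono (A A' B' : GObj) (j : A' -> B') (p : A -> A') (g : A -> B') :
  NMono j -> Lmor g -> (forall x, j (p x) = g x) -> Lmor p.
Proof.
move=> Hj Lg jp; have Lj := NMono_Lmor Hj.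
apply: join_morph_Lmor => [|x y]; apply: (NMono_inj Hj).
  by rewrite jp !Lmor_bot.
by rewrite (Lmor_join Lj) !jp (Lmor_join Lg).
Qed.

Lemma Lmor_cancel_surj (B B' X : GObj) (q : B -> B') (w : B' -> X) (g : B -> X) :
  Lmor q -> (forall t, exists y, q y = t) -> Lmor g -> (forall y, w (q y) = g y) ->
  Lmor w.
Proof.
move=> Lq q_surj Lg wq; apply: join_morph_Lmor => [|s t].
  by rewrite -(Lmor_bot Lq) wq (Lmor_bot Lg).
have [y <-] := q_surj s; have [y' <-] := q_surj t.
by rewrite -(Lmor_join Lq) !wq (Lmor_join Lg).
Qed.

Lemma Lmor_to_bool_notle (A : GObj) (m : A) : Lmor (fun x : A => ~~ (x <= m) : boolG).
Proof. by apply: join_morph_Lmor => [|x y]; rewrite ?le0x // leUx negb_and. Qed.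

Lemma Lmor_from_bool (B : GObj) (f : boolG -> B) : f false = \bot -> Lmor f.
Proof.
move=> f0; apply: join_morph_Lmor => // x y.
by case: x; case: y; rewrite /= ?f0 ?join0x ?joinx0 ?joinxx.
Qed.

Definition pick_preim (A B : GObj) (f : A -> B) (y : B) : A :=
  odflt \bot [pick x | f x == y].

Lemma pick_preimK (A B : GObj) (f : A -> B) y :
  (exists x, f x = y) -> f (pick_preim f y) = y.
Proof.
case=> x fx; rewrite /pick_preim; case: pickP => [a /eqP //|/(_ x)].
by rewrite fx eqxx.
Qed.

(* Equivalent to [NEpi f] by [NEpiP]: the isomorphism [phi] of the
   definition can be taken to be [f] itself. *)
Record NEpiAt (A B : GObj) (f : A -> B) (x0 : A) : Prop := {
  NEpiAt_Lmor : Lmor f;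
  NEpiAt_le : forall y z, (f y <= f z) = (y `|` x0 <= z `|` x0);
  NEpiAt_surj : forall w, exists y, f y = w }.

Section NormalEpis.
Variables (A B : GObj) (f : A -> B).

Lemma NEpiAt_joinr x0 : NEpiAt f x0 -> forall y, f (y `|` x0) = f y.
Proof. by move=> Hf y; apply/le_anti; rewrite !(NEpiAt_le Hf) -joinA joinxx lexx. Qed.

Lemma NEpiAt_ker x0 : NEpiAt f x0 -> f x0 = \bot.
Proof. by move=> Hf; rewrite -(join0x x0) NEpiAt_joinr // (Lmor_bot (NEpiAt_Lmor Hf)). Qed.

Lemma NEpiAt_top x0 : NEpiAt f x0 -> f \top = \top.
Proof.
move=> Hf; have [y fy] := NEpiAt_surj Hf \top.
by apply/le_anti; rewrite lex1 -fy (Lmor_le (NEpiAt_Lmor Hf)) ?lex1.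
Qed.

Lemma NEpiP : NEpi f <-> exists x0, NEpiAt f x0.
Proof.
split=> [[Lf [x0 [phi [phi_le [phi_surj fE]]]]]|[x0 Hf]].
  exists x0; split=> // [y z|w]; first by rewrite !fE phi_le ?leUr.
  by have [y [x0y <-]] := phi_surj w; exists y; rewrite fE (join_idPl x0y).
split; first exact: NEpiAt_Lmor Hf.
exists x0, f; split=> [y z x0y x0z|]; first by rewrite (NEpiAt_le Hf) !(join_idPl _).
split=> [w|y]; last by rewrite (NEpiAt_joinr Hf).
by have [y <-] := NEpiAt_surj Hf w; exists (y `|` x0); rewrite leUr NEpiAt_joinr.
Qed.

Lemma NEpi_surj : NEpi f -> forall w, exists y, f y = w.
Proof. by case/NEpiP => x0 /NEpiAt_surj. Qed.

Lemma NEpi_top : NEpi f -> f \top = \top.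
Proof. by case/NEpiP => x0 /NEpiAt_top. Qed.

End NormalEpis.

Lemma NMono_factor (X A B : GObj) (i : A -> B) (u : X -> B) :
  NMono i -> Lmor u -> (forall x, u x <= i \top) ->
  Lmor (pick_preim i \o u) /\ forall x, i (pick_preim i (u x)) = u x.
Proof.
move=> Hi Lu u_le; have iK x : i (pick_preim i (u x)) = u x.
  by apply: pick_preimK; exact: NMono_down Hi (u_le x).
by split=> //; exact: Lmor_cancel_mono Hi Lu iK.
Qed.

Lemma NEpiAt_factor (B B' X : GObj) (q : B -> B') (b0 : B) (u : B -> X) :
  NEpiAt q b0 -> Lmor u -> u b0 = \bot ->
  Lmor (u \o pick_preim q) /\ forall y, u (pick_preim q (q y)) = u y.
Proof.
move=> Hq Lu ub0.
have u_fibre y y' : q y = q y' -> u y = u y'.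
  move=> qyy'; have : y `|` b0 = y' `|` b0.
    by apply/le_anti; rewrite -!(NEpiAt_le Hq) qyy' lexx.
  by move/(congr1 u); rewrite !(Lmor_join Lu) ub0 !joinx0.
have uK y : u (pick_preim q (q y)) = u y by apply/u_fibre/pick_preimK; exists y.
split=> //; exact: Lmor_cancel_surj (NEpiAt_Lmor Hq) (NEpiAt_surj Hq) Lu uK.
Qed.

Section BicartesianSquare.
Variables (A B A' B' : GObj) (i : A -> B) (p : A -> A') (j : A' -> B') (q : B -> B').
Variable b0 : B.
Hypotheses (Hi : NMono i) (Hj : NMono j) (Hp : NEpi p) (Hq : NEpiAt q b0).
Hypothesis ipjq : commutes i p j q.

Let Li := NMono_Lmor Hi.
Let Lj := NMono_Lmor Hj.
Let Lq := NEpiAt_Lmor Hq.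

Lemma pullback_of_ker_le : b0 <= i \top -> GPullback i p j q.
Proof.
move=> b0_i; split=> // X u v Lu Lv uv.
have u_le x : u x <= i \top.
  have : q (u x) <= q (i \top) by rewrite uv ipjq (NEpi_top Hp) (Lmor_le Lj (lex1 _)).
  by rewrite (NEpiAt_le Hq) (join_idPl b0_i) leUx => /andP[].
have [Lw iw] := NMono_factor Hi Lu u_le.
exists (pick_preim i \o u); split=> //; split=> //; split.
  by move=> x; apply: (NMono_inj Hj); rewrite -ipjq iw uv.
by move=> w' _ iw' _ x; apply: (NMono_inj Hi); rewrite iw' iw.
Qed.

Lemma ker_le_of_pullback : GPullback i p j q -> b0 <= i \top.
Proof.
case=> _ pb_univ.
pose u (x : boolG) : B := if x then i \top `|` b0 else \bot.
pose v (x : boolG) : A' := if x then \top else \bot.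
have uv x : q (u x) = j (v x).
  by case: x; rewrite /= ?(Lmor_bot Lq) ?(Lmor_bot Lj) // NEpiAt_joinr // ipjq NEpi_top.
have Lu : Lmor u by apply: Lmor_from_bool.
have Lv : Lmor v by apply: Lmor_from_bool.
have [w [Lw [iw _]]] := pb_univ boolG u v Lu Lv uv.
have : i (w true) <= i \top by rewrite (Lmor_le Li (lex1 _)).
by rewrite iw leUx => /andP[].
Qed.

Lemma pushout_of_ker_le : b0 <= i \top -> GPushout i p j q.
Proof.
move=> b0_i; split=> // X u v Lu Lv uv.
have [a0 ia0] := NMono_down Hi b0_i.
have pa0 : p a0 = \bot.
  by apply: (NMono_inj Hj); rewrite -ipjq ia0 (NEpiAt_ker Hq) (Lmor_bot Lj).
have ub0 : u b0 = \bot by rewrite -ia0 uv pa0 (Lmor_bot Lv).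
have [Lw wq] := NEpiAt_factor Hq Lu ub0.
exists (u \o pick_preim q); split=> //; split=> //; split.
  by move=> z; have [x <-] := NEpi_surj Hp z; rewrite /= -ipjq wq uv.
move=> w' _ w'q _ t; have [y <-] := NEpiAt_surj Hq t.
by rewrite w'q /= wq.
Qed.

Lemma ker_le_of_pushout : GPushout i p j q -> b0 <= i \top.
Proof.
case=> _ po_univ.
pose u (y : B) : boolG := ~~ (y <= b0 `&` i \top).
pose v (z : A') : boolG := ~~ (z <= \bot).
have uv x : u (i x) = v (p x).
  rewrite /u /v -(NMono_le Hj) -ipjq (Lmor_bot Lj) -(Lmor_bot Lq) (NEpiAt_le Hq).
  by rewrite join0x leUx lexx andbT lexI (Lmor_le Li (lex1 x)) andbT.
have [w [Lw [wq _]]] := po_univ boolG u v (Lmor_to_bool_notle _) (Lmor_to_bool_notle _) uv.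
have := wq b0; rewrite (NEpiAt_ker Hq) (Lmor_bot Lw) /u.
by rewrite lexI lexx /=; case: (b0 <= i \top).
Qed.

Lemma pullbackP : GPullback i p j q <-> b0 <= i \top.
Proof. by split; [exact: ker_le_of_pullback | exact: pullback_of_ker_le]. Qed.

Lemma pushoutP : GPushout i p j q <-> b0 <= i \top.
Proof. by split; [exact: ker_le_of_pushout | exact: pushout_of_ker_le]. Qed.

End BicartesianSquare.

Lemma GZero_ZeroG : GZero ZeroG.
Proof.
split=> A; exists (fun _ => \bot); (split; first exact: Lmor_const_bot).
  by move=> g Lg z; rewrite (ZeroG_eq z \bot) (Lmor_bot Lg).
by move=> g _ a; exact: ZeroG_eq.
Qed.

Lemma NMono_from_ZeroG (A : GObj) : NMono (fun _ : ZeroG => \bot : A).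
Proof.
apply: NMono_of_down => [|x y _|y]; first exact: Lmor_const_bot; first exact: ZeroG_eq.
by exists \bot; apply/le_anti; rewrite le0x.
Qed.

Lemma NEpi_to_ZeroG (A : GObj) : NEpi (fun _ : A => \bot : ZeroG).
Proof.
apply/NEpiP; exists \top; split=> [|y z|w]; first exact: Lmor_const_bot.
  by rewrite !joinx1 !lexx.
by exists \top; exact: ZeroG_eq.
Qed.

Lemma GIso_NMono (A B : GObj) (f : A -> B) : GIso f -> NMono f.
Proof.
case=> Lf [g [_ [gf fg]]]; apply: NMono_of_down => // [|y _]; last by exists (g y).
exact: can_inj gf.
Qed.

Lemma GIso_NEpi (A B : GObj) (f : A -> B) : GIso f -> NEpi f.
Proof.
case=> Lf [g [Lg [gf fg]]]; apply/NEpiP; exists \bot.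
split=> // [y z|w]; last by exists (g w).
rewrite !joinx0; apply/idP/idP => [/(Lmor_le Lg)|]; first by rewrite !gf.
exact: Lmor_le.
Qed.

Lemma NMono_comp (A B C : GObj) (f : A -> B) (g : B -> C) :
  NMono f -> NMono g -> NMono (g \o f).
Proof.
move=> Hf Hg; split; first exact: Lmor_comp (NMono_Lmor Hf) (NMono_Lmor Hg).
split; first exact: inj_comp (NMono_inj Hg) (NMono_inj Hf).
move=> x y /= ygfx; have [z gz] := NMono_down Hg ygfx.
move: ygfx; rewrite -gz (NMono_le Hg) => /(NMono_down Hf)[t ft].
by exists t; rewrite /= ft.
Qed.

Lemma NEpi_comp (A B C : GObj) (f : A -> B) (g : B -> C) :
  NEpi f -> NEpi g -> NEpi (g \o f).
Proof.
case/NEpiP=> x0 Hf /NEpiP[y0 Hg]; have [y1 fy1] := NEpiAt_surj Hf y0.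
apply/NEpiP; exists (x0 `|` y1); split=> [|y z|w] /=.
- exact: Lmor_comp (NEpiAt_Lmor Hf) (NEpiAt_Lmor Hg).
- rewrite (NEpiAt_le Hg) -fy1 -!(Lmor_join (NEpiAt_Lmor Hf)) (NEpiAt_le Hf).
  by rewrite [x0 `|` _]joinC !joinA.
- have [t <-] := NEpiAt_surj Hg w; have [s <-] := NEpiAt_surj Hf t.
  by exists s.
Qed.

Lemma ival_NMono (A : GObj) (c : A) : NMono (fun x : GItv \bot c => ival x).
Proof.
apply: NMono_of_down => [||y yc]; [exact: join_morph_Lmor | exact: val_inj |].
have y_in : inItv \bot c y by rewrite /inItv le0x yc.
by exists (MkItv y_in).
Qed.

Lemma inItv_joinr (A : GObj) (b y : A) : inItv b \top (y `|` b).
Proof. by rewrite /inItv leUr joinx1 lex1. Qed.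

Definition join_quot (A : GObj) (b y : A) : GItv b \top := MkItv (inItv_joinr b y).

Lemma join_quot_NEpiAt (A : GObj) (b : A) : NEpiAt (join_quot b) b.
Proof.
split=> // [|w].
  apply: join_morph_Lmor => [|y z]; apply: val_inj; rewrite /= ?join0x //.
  by rewrite joinACA joinxx.
by exists (ival w); apply/val_inj/join_idPl/Itv_ge_lo.
Qed.

Section CospanCompletion.
Variables (A' B B' : GObj) (j : A' -> B') (q : B -> B') (b0 : B).
Hypotheses (Hj : NMono j) (Hq : NEpiAt q b0).

Let c : B := pick_preim q (j \top) `|` b0.
Let A := GItv \bot c.
Let p (x : A) : A' := pick_preim j (q (ival x)).

Lemma cospan_q_c : q c = j \top.
Proof. by rewrite /c (NEpiAt_joinr Hq); exact/pick_preimK/(NEpiAt_surj Hq). Qed.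

Lemma cospan_b0_in : inItv \bot c b0.
Proof. by rewrite /inItv le0x join0x leUr. Qed.

Lemma cospan_jp x : j (p x) = q (ival x).
Proof.
apply: pick_preimK; apply: (NMono_down (x := \top) Hj).
rewrite -cospan_q_c (Lmor_le (NEpiAt_Lmor Hq)) //.
by have := Itv_le_hi x; rewrite join0x.
Qed.

Lemma cospan_p_NEpiAt : NEpiAt p (MkItv cospan_b0_in).
Proof.
have Lp : Lmor p.
  apply: Lmor_cancel_mono Hj _ cospan_jp.
  exact: Lmor_comp (NMono_Lmor (ival_NMono c)) (NEpiAt_Lmor Hq).
split=> // [y z|w]; first by rewrite -(NMono_le Hj) !cospan_jp (NEpiAt_le Hq).
have [t qt] := NEpiAt_surj Hq (j w).
have t_in : inItv \bot c (t `|` b0).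
  have c_b0 : c `|` b0 = c by rewrite /c -joinA joinxx.
  rewrite /inItv le0x join0x -c_b0 -(NEpiAt_le Hq) qt cospan_q_c.
  exact: Lmor_le (NMono_Lmor Hj) _ _ (lex1 w).
by exists (MkItv t_in); apply: (NMono_inj Hj); rewrite cospan_jp /= NEpiAt_joinr.
Qed.

Lemma cospan_completion_at :
  exists (A : GObj) (i : A -> B) (p : A -> A'),
    NMono i /\ NEpi p /\ GPullback i p j q /\ GPushout i p j q.
Proof.
have Hp : NEpi p by apply/NEpiP; exists (MkItv cospan_b0_in); exact: cospan_p_NEpiAt.
have ipjq : commutes (fun x : A => ival x) p j q by move=> x; rewrite cospan_jp.
have b0_c : b0 <= ival (\top : A) by rewrite ival_top join0x leUr.
exists A, (fun x => ival x), p; split; first exact: ival_NMono.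
split=> //; split.
  exact: (pullbackP (ival_NMono c) Hj Hp Hq ipjq).2 b0_c.
exact: (pushoutP (ival_NMono c) Hj Hp Hq ipjq).2 b0_c.
Qed.

End CospanCompletion.

Section SpanCompletion.
Variables (A A' B : GObj) (p : A -> A') (i : A -> B) (a0 : A).
Hypotheses (Hp : NEpiAt p a0) (Hi : NMono i).

Let q := join_quot (i a0).
Let j (z : A') := q (i (pick_preim p z)).

Lemma span_qi_fibre x x' : (p x == p x') = (q (i x) == q (i x')).
Proof.
rewrite -(inj_eq val_inj) /= -!(Lmor_join (NMono_Lmor Hi)) (inj_eq (NMono_inj Hi)).
by rewrite !eq_le !(NEpiAt_le Hp).
Qed.

Lemma span_jp x : j (p x) = q (i x).
Proof. by apply/eqP; rewrite -span_qi_fibre pick_preimK //; exists x. Qed.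

Lemma span_j_NMono : NMono j.
Proof.
have Lj : Lmor j.
  apply: Lmor_cancel_surj (NEpiAt_Lmor Hp) (NEpiAt_surj Hp) _ span_jp.
  exact: Lmor_comp (NMono_Lmor Hi) (NEpiAt_Lmor (join_quot_NEpiAt _)).
apply: NMono_of_down => // [z z'|y].
  have [x <-] := NEpiAt_surj Hp z; have [x' <-] := NEpiAt_surj Hp z'.
  by rewrite !span_jp => /eqP; rewrite -span_qi_fibre => /eqP.
have [x <-] := NEpiAt_surj Hp \top; rewrite span_jp => y_le.
have [t it] : exists t, i t = ival y.
  apply: (NMono_down (x := x `|` a0) Hi).
  by rewrite (Lmor_join (NMono_Lmor Hi)); exact: y_le.
by exists (p t); rewrite span_jp; apply: val_inj; rewrite /= it; exact/join_idPl/Itv_ge_lo.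
Qed.

Lemma span_completion_at :
  exists (B' : GObj) (j : A' -> B') (q : B -> B'),
    NMono j /\ NEpi q /\ GPullback i p j q /\ GPushout i p j q.
Proof.
have Hp' : NEpi p by apply/NEpiP; exists a0.
have ipjq : commutes i p j q by move=> x; rewrite span_jp.
have a0_top : i a0 <= i \top by rewrite (Lmor_le (NMono_Lmor Hi) (lex1 _)).
have Hq := join_quot_NEpiAt (i a0).
exists (GItv (i a0) \top), j, q; split; first exact: span_j_NMono.
split; first by apply/NEpiP; exists (i a0).
split; first exact: (pullbackP Hi span_j_NMono Hp' Hq ipjq).2 a0_top.
exact: (pushoutP Hi span_j_NMono Hp' Hq ipjq).2 a0_top.
Qed.

End SpanCompletion.

Lemma pullback_iff_pushout (A B A' B' : GObj) (i : A -> B) (p : A -> A')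
    (j : A' -> B') (q : B -> B') :
  NMono i -> NMono j -> NEpi p -> NEpi q -> commutes i p j q ->
  GPullback i p j q <-> GPushout i p j q.
Proof.
move=> Hi Hj Hp /NEpiP[b0 Hq] ipjq.
exact: iff_trans (pullbackP Hi Hj Hp Hq ipjq) (iff_sym (pushoutP Hi Hj Hp Hq ipjq)).
Qed.

Lemma cospan_completion (A' B B' : GObj) (j : A' -> B') (q : B -> B') :
  NMono j -> NEpi q ->
  exists (A : GObj) (i : A -> B) (p : A -> A'),
    NMono i /\ NEpi p /\ GPullback i p j q /\ GPushout i p j q.
Proof. by move=> Hj /NEpiP[b0 Hq]; exact: cospan_completion_at Hj Hq. Qed.

Lemma span_completion (A A' B : GObj) (p : A -> A') (i : A -> B) :
  NEpi p -> NMono i ->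
  exists (B' : GObj) (j : A' -> B') (q : B -> B'),
    NMono j /\ NEpi q /\ GPullback i p j q /\ GPushout i p j q.
Proof. by case/NEpiP=> a0 Hp Hi; exact: span_completion_at Hp Hi. Qed.

Theorem mainTheorem6 : ProtoExactG.
Proof.
split.
  exists ZeroG; split; first exact: GZero_ZeroG.
  by move=> A; split; [exists (fun _ => \bot); exact: NMono_from_ZeroG
                      | exists (fun _ => \bot); exact: NEpi_to_ZeroG].
split; first by move=> A B f Hf; split; [exact: GIso_NMono | exact: GIso_NEpi].
split; first exact: NMono_comp.
split; first exact: NEpi_comp.
split; first exact: pullback_iff_pushout.
split; first exact: cospan_completion.
exact: span_completion.
Qed.
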